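(* Let $a\ge2$, $d\ge1$ and $s$ be integers with $\gcd(a,d)=1$ and $1\le s<a$. Let $\mathit{NR}$ be the set of positive integers not representable as $\sum_{i=0}^s(a+id)x_i$ with $x_0,\dots,x_s$ nonnegative integers, and let $S_m=\sum_{n\in\mathit{NR}}n^m$. Then for every integer $m\ge1$, \[ mS_{m-1}=a^{m-1}\sum_{n=0}^{a-1}B_m\!\left(\lceil n/s\rceil+\frac{nd}{a}\right)-B_m . \]
   Context: $B_m(x)$ denotes the Bernoulli polynomials, defined by $\frac{te^{tx}}{e^t-1}=\sum_{m\ge0}B_m(x)\frac{t^m}{m!}$, and $B_m=B_m(0)$. $\lceil x\rceil$ is the least integer not less than $x$. *)

From HB Require Import structures.
From mathcomp Require Import all_boot all_order all_algebra.
Set Implicit Arguments. Unset Strict Implicit. Unset Printing Implicit Defensive.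
Import Order.TTheory GRing.Theory Num.Theory.
Local Open Scope ring_scope.

(* Bernoulli numbers B_0, ..., B_n, via the recursion equivalent to the
   generating function t/(e^t-1) = sum B_m t^m/m!  (so B_1 = -1/2):
   B_0 = 1 and sum_{k=0}^{n} C(n+1,k) B_k = 0 for n >= 1. *)
Fixpoint bern_seq (n : nat) : seq rat :=
  match n with
  | 0 => [:: 1]
  | n'.+1 =>
      let s := bern_seq n' in
      rcons s (- (\sum_(k < n'.+1) ('C(n'.+2, k))%:R * s`_k) / (n'.+2)%:R)
  end.

Definition bernoulli (n : nat) : rat := (bern_seq n)`_n.

Definition bernpoly (m : nat) (x : rat) : rat :=
  \sum_(k < m.+1) ('C(m, k))%:R * bernoulli k * x ^+ (m - k).

Definition ceil_div (n s : nat) : nat := (n + s.-1) %/ s.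

Definition representable (a d s n : nat) : Prop :=
  exists x : nat -> nat, n = (\sum_(i < s.+1) (a + i * d) * x i)%N.

Definition NR (a d s n : nat) : Prop := (0 < n)%N /\ ~ representable a d s n.

(* Sort the positive integers by residue modulo a.  As d is invertible modulo
   a, every class is c d + aZ for a unique c < a, and a sum of k generators is
   k a + j d with j <= k s, so the least representable element of the class is
   w_c = ceil(c/s) a + c d; every larger element of the class is representable.
   The gaps of the class are thus r_c + t a with r_c = c d mod a and t < w_c / a.
   Faulhaber's formula m sum_(t < K) (x + t)^(m-1) = B_m(x + K) - B_m(x) sums
   their (m-1)-st powers to a^(m-1) (B_m(w_c / a) - B_m(r_c / a)).  Finally the
   r_c run over 0, ..., a-1, and Raabe's multiplication formula
   a^(m-1) sum_(r < a) B_m(r / a) = B_m evaluates the subtracted terms. *)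

From HB Require Import structures.
From mathcomp Require Import all_boot all_order all_algebra.
From mathcomp Require Import zify ring.
Import Order.TTheory GRing.Theory Num.Theory.

Lemma ceil_div_leq c s k : 0 < s -> (ceil_div c s <= k) = (c <= k * s).
Proof. by move=> s_gt0; rewrite /ceil_div -ltnS ltn_divLR // mulSn; lia. Qed.

Lemma coprime_eqn_modM2r a d c c' :
  coprime a d -> (c * d == c' * d %[mod a]) = (c == c' %[mod a]).
Proof.
move=> co_ad; wlog le_c'c : c c' / c' <= c.
  by move=> W; case: (leqP c' c) => [|/ltnW] /W //; rewrite eq_sym [RHS]eq_sym.
by rewrite !eqn_mod_dvd ?leq_mul2r ?le_c'c ?orbT // -mulnBl Gauss_dvdl.
Qed.

Lemma ffactD n i j : n ^_ (j + i) = n ^_ j * (n - j) ^_ i.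
Proof.
rewrite !ffact_prod big_split_ord /=; congr (_ * _).
by apply: eq_bigr => k _; rewrite subnDA.
Qed.

Lemma bin_binD n i j : 'C(n, j + i) * 'C(j + i, j) = 'C(n, j) * 'C(n - j, i).
Proof.
have fact_ji : 'C(j + i, j) * (j`! * i`!) = (j + i)`!.
  by have := bin_fact (leq_addr i j); rewrite addKn.
have facts_gt0 : 0 < j`! * i`! by rewrite muln_gt0 !fact_gt0.
apply/eqP; rewrite -(eqn_pmul2r facts_gt0).
rewrite -mulnA fact_ji bin_ffact ffactD -!bin_ffact.
by apply/eqP; ring.
Qed.

Section NumericalSemigroup.

Variables a d s : nat.

Lemma representable0 : representable a d s 0.
Proof. by exists (fun=> 0); rewrite big1 // => i _; rewrite muln0. Qed.

Lemma representableD n i : representable a d s n -> i <= s ->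
  representable a d s (n + (a + i * d)).
Proof.
move=> [x ->] le_is; pose i' : 'I_s.+1 := Ordinal (le_is : i < s.+1).
exists (fun t => x t + (t == i)); rewrite (bigD1 i') // [RHS](bigD1 i') //= eqxx.
have -> : \sum_(t < s.+1 | t != i') (a + t * d) * (x t + (t == i :> nat)) =
          \sum_(t < s.+1 | t != i') (a + t * d) * x t.
  apply: eq_bigr => t ne_ti; suff /negbTE-> : t != i :> nat by rewrite addn0.
  by apply: contraNneq ne_ti => eq_ti; apply/eqP/val_inj.
by rewrite addn1 mulnS; ring.
Qed.

Lemma representableP n : representable a d s n <->
  exists k j, j <= k * s /\ n = k * a + j * d.
Proof.
split=> [[x ->]|[k [j [le_jks ->]]]].
  exists (\sum_(i < s.+1) x i), (\sum_(i < s.+1) i * x i); split.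
    by rewrite big_distrl leq_sum // => i _; rewrite mulnC leq_mul2l -ltnS ltn_ord orbT.
  by rewrite !big_distrl -big_split; apply: eq_bigr => i _ /=; ring.
elim: k j le_jks => [|k IHk] j; first by rewrite leqn0 => /eqP->; exact: representable0.
move=> le_jks; set i := minn j s; set j' := j - i.
have -> : j = j' + i by rewrite subnK // geq_minl.
have -> : k.+1 * a + (j' + i) * d = k * a + j' * d + (a + i * d) by ring.
apply: representableD (geq_minr j s); apply: IHk.
by move: le_jks; rewrite mulSn; lia.
Qed.

Hypothesis a_gt0 : 0 < a.
Hypothesis s_gt0 : 0 < s.
Hypothesis coprime_ad : coprime a d.

Definition mulmod (c : 'I_a) : 'I_a := Ordinal (ltn_pmod (c * d) a_gt0).

Lemma mulmod_inj : injective mulmod.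
Proof.
move=> c c' /(congr1 val) /eqP /=; rewrite coprime_eqn_modM2r //.
by rewrite !modn_small // => /eqP /val_inj.
Qed.

Lemma mulmod_onto n : exists c : 'I_a, c * d = n %[mod a].
Proof.
have /codomP [c /(congr1 val) /= eq_c] :=
  injF_onto mulmod_inj (Ordinal (ltn_pmod n a_gt0)).
by exists c.
Qed.

(* The least representable number congruent to [c * d] modulo [a]. *)
Definition apery c := ceil_div c s * a + c * d.

Lemma apery_mod c : apery c = c * d %[mod a].
Proof. exact: modnMDl. Qed.

Lemma representable_apery n c : c < a -> n = c * d %[mod a] ->
  representable a d s n <-> apery c <= n.
Proof.
move=> lt_ca eq_n; split.
  move: eq_n => /[swap] /representableP [k [j [le_jks ->]]] /eqP.
  rewrite modnMDl coprime_eqn_modM2r // (modn_small lt_ca) => /eqP eq_jc.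
  have le_cj : c <= j by rewrite -eq_jc leq_mod.
  have le_ck : ceil_div c s <= k by rewrite ceil_div_leq // (leq_trans le_cj).
  by rewrite leq_add // leq_mul2r ?le_ck ?le_cj orbT.
move=> le_apery_n; move: eq_n => /eqP; rewrite -apery_mod eqn_mod_dvd //.
case/dvdnP => u def_u; apply/representableP; exists (ceil_div c s + u), c; split.
  by rewrite (leq_trans _ (leq_mul (leq_addr u _) (leqnn s))) // -ceil_div_leq.
by move: def_u le_apery_n; rewrite /apery mulnDl; lia.
Qed.

Definition gaps :=
  [seq c * d %% a + t * a | c <- index_iota 0 a, t <- index_iota 0 (apery c %/ a)].

Lemma apery_divE c : apery c = apery c %/ a * a + c * d %% a.
Proof. by rewrite {1}(divn_eq (apery c) a) apery_mod. Qed.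

Lemma NR_not_representable n : NR a d s n <-> ~ representable a d s n.
Proof.
split=> [[]//|nrep]; split=> //; rewrite lt0n.
by apply: contra_notN nrep => /eqP->; exact: representable0.
Qed.

Lemma mem_gaps n : n \in gaps <-> NR a d s n.
Proof.
apply: (iff_trans _ (iff_sym (NR_not_representable n))); split.
  case/allpairsPdep => c [t [+ + ->]]; rewrite !mem_index_iota /= => lt_ca lt_t.
  have eq_n : c * d %% a + t * a = c * d %[mod a] by rewrite addnC modnMDl modn_mod.
  rewrite (representable_apery _ _ lt_ca eq_n); apply/negP; rewrite -ltnNge apery_divE.
  by rewrite [c * d %% a + _]addnC ltn_add2r ltn_pmul2r.
move=> nrep; have [c eq_c] := mulmod_onto n.
have lt_n : n < apery c.
  by rewrite ltnNge; apply/negP => /(representable_apery _ _ (ltn_ord c) (esym eq_c)).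
apply/allpairsPdep; exists (val c), (n %/ a); rewrite !mem_index_iota ltn_ord /=.
split=> //; last by rewrite eq_c addnC -divn_eq.
by rewrite -(ltn_pmul2r a_gt0) -(ltn_add2r (n %% a)) -divn_eq -eq_c -apery_divE.
Qed.

Lemma gaps_uniq : uniq gaps.
Proof.
apply: allpairs_uniq_dep => [|c _|]; rewrite ?iota_uniq //.
move=> [c1 t1] [c2 t2] /allpairsPdep [x1 [_ [lt1 _ /(congr1 tag) /= eq1]]].
move=> /allpairsPdep [x2 [_ [lt2 _ /(congr1 tag) /= eq2]]] /= eq_gap.
subst x1 x2; move: lt1 lt2; rewrite !mem_index_iota /= => lt1 lt2.
have eq_c : c1 = c2.
  have /eqP := congr1 (modn^~ a) eq_gap; rewrite /= ![_ %% a + _]addnC !modnMDl !modn_mod.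
  by rewrite coprime_eqn_modM2r // !modn_small // => /eqP.
by subst c2; move: eq_gap => /addnI /eqP; rewrite eqn_pmul2r // => /eqP ->.
Qed.

End NumericalSemigroup.

Local Open Scope ring_scope.

Section Appell.

Variables (R : comPzRingType) (b : nat -> R).

Definition appell m x := \sum_(k < m.+1) 'C(m, k)%:R * b k * x ^+ (m - k).

Lemma appell0 m : appell m 0 = b m.
Proof.
rewrite /appell big_ord_recr /= subnn binn mul1r mulr1 big1 ?add0r // => k _.
by rewrite expr0n subn_eq0 leqNgt ltn_ord mulr0.
Qed.

Lemma sum_bin_mul_expr m j (x y : R) : (j <= m)%N ->
  \sum_(0 <= k < m.+1) 'C(m, k)%:R * 'C(k, j)%:R * x ^+ (k - j) * y ^+ (m - k) =
  'C(m, j)%:R * (x + y) ^+ (m - j).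
Proof.
move=> le_jm; rewrite (@big_cat_nat _ _ _ j) ?leqW //=.
rewrite big_nat_cond big1 ?add0r => [|k /andP [/andP [_ lt_kj] _]]; last first.
  by rewrite (bin_small lt_kj) mulr0 !mul0r.
rewrite -{1}[j]add0n big_addn subSn // addrC exprDn mulr_sumr big_mkord.
apply: eq_bigr => i _; rewrite [(i + j)%N]addnC -natrM bin_binD natrM addKn subnDA.
by rewrite mulrnAr -mulr_natl; ring.
Qed.

Lemma appell_widen m k x : (k <= m)%N ->
  appell k x = \sum_(j < m.+1) 'C(k, j)%:R * b j * x ^+ (k - j).
Proof.
move=> le_km; rewrite /appell
  (big_ord_widen m.+1 (fun j => 'C(k, j)%:R * b j * x ^+ (k - j))) //.
rewrite big_mkcond; apply: eq_bigr => j _.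
by case: ltnP => // /bin_small ->; rewrite !mul0r.
Qed.

Lemma appellD m x y :
  appell m (x + y) = \sum_(k < m.+1) 'C(m, k)%:R * appell k x * y ^+ (m - k).
Proof.
under eq_bigr => k _ do
  rewrite (appell_widen m k x (ltnSE (ltn_ord k))) mulr_sumr mulr_suml.
rewrite exchange_big; apply: eq_bigr => j _ /=.
rewrite mulrAC -(sum_bin_mul_expr m j x y (ltnSE (ltn_ord j))) mulr_suml big_mkord.
by apply: eq_bigr => k _; ring.
Qed.

End Appell.

Lemma size_bern_seq n : size (bern_seq n) = n.+1.
Proof. by elim: n => //= n IHn; rewrite size_rcons IHn. Qed.

Lemma nth_bern_seq n k : (k <= n)%N -> (bern_seq n)`_k = bernoulli k.
Proof.
elim: n => [|n IHn]; first by rewrite leqn0 => /eqP->.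
rewrite leq_eqVlt => /predU1P [->//|lt_kn].
by rewrite /= nth_rcons size_bern_seq lt_kn IHn.
Qed.

Lemma bernoulliS n :
  bernoulli n.+1 = - (\sum_(k < n.+1) 'C(n.+2, k)%:R * bernoulli k) / n.+2%:R.
Proof.
rewrite /bernoulli /= nth_rcons size_bern_seq ltnn eqxx.
by congr (- _ / _); apply: eq_bigr => k _; rewrite nth_bern_seq // -ltnS.
Qed.

Lemma sum_bernoulli N : (1 < N)%N -> \sum_(k < N) 'C(N, k)%:R * bernoulli k = 0.
Proof.
case: N => [|[|n]] // _; rewrite big_ord_recr /= binSn bernoulliS.
by rewrite mulrC divfK ?pnatr_eq0 // subrr.
Qed.

Lemma bernoulli_recursion_unique (f : nat -> rat) :
    (forall N, (1 < N)%N -> \sum_(k < N) 'C(N, k)%:R * f k = 0) ->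
  forall n, f n = f 0%N * bernoulli n.
Proof.
move=> rec_f; elim/ltn_ind => -[|n] IHn; first by rewrite mulr1.
have := rec_f n.+2 isT; rewrite big_ord_recr /= binSn => /eqP.
rewrite addrC addr_eq0 => /eqP eq_f.
have nz_n2 : n.+2%:R != 0 :> rat by rewrite pnatr_eq0.
rewrite -[f n.+1](mulKf nz_n2) eq_f.
have -> : \sum_(k < n.+1) 'C(n.+2, k)%:R * f k =
          f 0%N * \sum_(k < n.+1) 'C(n.+2, k)%:R * bernoulli k.
  by rewrite mulr_sumr; apply: eq_bigr => k _; rewrite IHn 1?mulrCA // ltnW.
by rewrite bernoulliS; ring.
Qed.

Lemma bernpoly0 m : bernpoly m 0 = bernoulli m.
Proof. exact: appell0. Qed.

Lemma bernpolyD m x y :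
  bernpoly m (x + y) = \sum_(k < m.+1) 'C(m, k)%:R * bernpoly k x * y ^+ (m - k).
Proof. exact: appellD. Qed.

Lemma bernpoly1 m : bernpoly m 1 = bernoulli m + (m == 1%N)%:R.
Proof.
rewrite /bernpoly; under eq_bigr do rewrite expr1n mulr1.
case: m => [|[|m]]; first by rewrite big_ord1 addr0 mul1r.
  by rewrite !big_ord_recr big_ord0 /= add0r !mul1r addrC.
by rewrite big_ord_recr /= sum_bernoulli // add0r binn mul1r addr0.
Qed.

Lemma bernpoly_addr1 m x : (0 < m)%N ->
  bernpoly m (x + 1) - bernpoly m x = m%:R * x ^+ m.-1.
Proof.
case: m => // m _; rewrite [x + 1]addrC bernpolyD.
under eq_bigr do rewrite bernpoly1 mulrDr mulrDl.
rewrite big_split /= -/(bernpoly m.+1 x) addrAC subrr add0r.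
rewrite (bigD1 (lift ord0 ord0)) //= big1 ?addr0 => [|k /negbTE]; last first.
  by rewrite -val_eqE /= => ->; rewrite mulr0 mul0r.
by rewrite bin1 mulr1 subn1.
Qed.

Lemma sum_expr_bernpoly m x K : (0 < m)%N ->
  m%:R * \sum_(t < K) (x + t%:R) ^+ m.-1 = bernpoly m (x + K%:R) - bernpoly m x.
Proof.
move=> m_gt0; rewrite mulr_sumr -(big_mkord xpredT (fun t => m%:R * (x + t%:R) ^+ m.-1)).
rewrite (telescope_sumr_eq (fun t => bernpoly m (x + t%:R))) ?addr0 // => t _.
by rewrite -bernpoly_addr1 // -natr1 addrA.
Qed.

Lemma sum_bernpoly_frac a m : (0 < a)%N ->
  a%:R ^+ m * \sum_(r < a) bernpoly m (r%:R / a%:R) = a%:R * bernoulli m.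
Proof.
move=> a_gt0; have nz_a : a%:R != 0 :> rat by rewrite pnatr_eq0 -lt0n.
(* By the addition formula with step 1/a, F satisfies the Bernoulli recursion. *)
pose F k := a%:R ^+ k * \sum_(r < a) bernpoly k (r%:R / a%:R).
rewrite -/(F m); suff -> : F m = F 0%N * bernoulli m.
  rewrite /F expr0 mul1r; congr (_ * _).
  under eq_bigr do rewrite /bernpoly big_ord1 /= !mul1r.
  by rewrite sumr_const card_ord.
apply: bernoulli_recursion_unique => N N_gt1.
have shift :
    \sum_(r < a) bernpoly N (r.+1%:R / a%:R) = \sum_(r < a) bernpoly N (r%:R / a%:R).
  have := erefl (\sum_(r < a.+1) bernpoly N (r%:R / a%:R)).
  rewrite {1}big_ord_recl big_ord_recr /=.
  have N_neq1 : N != 1%N by case: N N_gt1 => [|[]].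
  rewrite divff // mul0r bernpoly1 bernpoly0 (negbTE N_neq1) addr0.
  by rewrite addrC => /addrI.
have : \sum_(k < N.+1) 'C(N, k)%:R * F k = F N.
  rewrite /F -shift mulr_sumr.
  under [RHS]eq_bigr => r _ do rewrite -natr1 mulrDl mul1r bernpolyD mulr_sumr.
  under [LHS]eq_bigr do rewrite mulrA mulr_sumr.
  rewrite exchange_big; apply: eq_bigr => r _.
  apply: eq_bigr => k _; have le_kN : (k <= N)%N by rewrite -ltnS.
  have pow_a : a%:R ^+ N * a%:R^-1 ^+ (N - k) = a%:R ^+ k :> rat.
    by rewrite exprVn exprB ?unitfE // invf_div mulrC divfK ?expf_neq0.
  by rewrite -pow_a; ring.
by rewrite big_ord_recr /= binn mul1r => /eqP; rewrite -subr_eq0 addrK => /eqP.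
Qed.

Section GapPowerSums.

Variables a d s : nat.
Hypothesis a_gt0 : (0 < a)%N.
Hypothesis coprime_ad : coprime a d.

Let nz_a : a%:R != 0 :> rat.
Proof. by rewrite pnatr_eq0 -lt0n. Qed.

Lemma sum_gap_class m c : (0 < m)%N ->
  m%:R * \sum_(0 <= t < apery a d s c %/ a) ((c * d %% a + t * a)%:R : rat) ^+ m.-1 =
  a%:R ^+ m.-1 * (bernpoly m ((ceil_div c s)%:R + (c * d)%:R / a%:R)
                  - bernpoly m ((c * d %% a)%:R / a%:R)).
Proof.
move=> m_gt0; set r := (c * d %% a)%N; set K := (apery a d s c %/ a)%N.
have -> : (ceil_div c s)%:R + (c * d)%:R / a%:R = r%:R / a%:R + K%:R :> rat.
  rewrite -[_ + _](mulfK nz_a) mulrDl divfK // -natrM -natrD -/(apery a d s c).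
  by rewrite apery_divE natrD natrM mulrDl mulfK // addrC.
rewrite -sum_expr_bernpoly // mulrCA big_mkord; congr (_ * _); rewrite mulr_sumr.
apply: eq_bigr => t _; rewrite -exprMn mulrDr mulrCA divff // mulr1.
by rewrite natrD natrM mulrC.
Qed.

Lemma sum_bernpoly_mulmod m : (0 < m)%N ->
  a%:R ^+ m.-1 * \sum_(c < a) bernpoly m ((c * d %% a)%:R / a%:R) = bernoulli m.
Proof.
case: m => // m _; apply: (mulfI nz_a).
rewrite mulrA -exprS -sum_bernpoly_frac //; congr (_ * _).
by rewrite [RHS](reindex_inj (mulmod_inj a d a_gt0 coprime_ad)).
Qed.

Lemma sum_gaps_expr m : (0 < m)%N ->
  m%:R * \sum_(n <- gaps a d s) (n%:R : rat) ^+ m.-1 =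
  a%:R ^+ m.-1 * \sum_(c < a) bernpoly m ((ceil_div c s)%:R + (c * d)%:R / a%:R)
  - bernoulli m.
Proof.
move=> m_gt0; rewrite big_allpairs_dep mulr_sumr.
rewrite (eq_bigr _ (fun c _ => sum_gap_class m c m_gt0)) -mulr_sumr big_mkord.
by rewrite sumrB mulrBr sum_bernpoly_mulmod.
Qed.

End GapPowerSums.

Theorem mainTheorem3 (a d s : nat) :
  (2 <= a)%N -> (1 <= d)%N -> coprime a d -> (1 <= s)%N -> (s < a)%N ->
  (exists l : seq nat, uniq l /\ forall n, n \in l <-> NR a d s n) /\
  forall l : seq nat, uniq l -> (forall n, n \in l <-> NR a d s n) ->
  forall m : nat, (1 <= m)%N ->
    (m%:R : rat) * (\sum_(n <- l) (n%:R : rat) ^+ (m.-1)) =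
    (a%:R : rat) ^+ (m.-1) *
      (\sum_(n < a) bernpoly m ((ceil_div n s)%:R + (n * d)%:R / a%:R))
    - bernoulli m.
Proof.
move=> a_gt1 _ coprime_ad s_gt0 _; have a_gt0 := ltnW a_gt1.
split; first by exists (gaps a d s); split; [exact: gaps_uniq | exact: mem_gaps].
move=> l uniq_l mem_l m m_gt0; rewrite -sum_gaps_expr //; congr (_ * _).
apply/perm_big/uniq_perm; rewrite ?gaps_uniq // => n.
have gapsP := mem_gaps a d s a_gt0 s_gt0 coprime_ad n.
by apply/idP/idP => [/mem_l/gapsP | /gapsP/mem_l].
Qed.
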